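(* Let $N\ge1$ and let $P_N$ be as in the context. For $t\in(0,\pi)$ with $t\ne\frac{2\pi}{N+2}$, $$\operatorname{Im}P_N(e^{it})=\frac{1-\cos\frac{2\pi}{N+2}}{(N+2)(1-\cos t)}\cdot\frac{\sin t\,\bigl(\sin\frac{(N+2)t}{2}\bigr)^2}{\bigl(\cos t-\cos\frac{2\pi}{N+2}\bigr)^2}.$$ In particular $\operatorname{Im}P_N(e^{it})\ge0$ for all $t\in[0,\pi]$, and $P_N$ (which has real coefficients) is typically real in the unit disc $\mathbb D=\{|z|<1\}$, i.e. $\operatorname{Im}P_N(z)\cdot\operatorname{Im}z\ge0$ for $z\in\mathbb D$.
   Context: For an integer $N\ge1$ put, for $k=1,\dots,N$, $$b_k=\frac{(N-k+3)\sin\frac{(k+1)\pi}{N+2}-(N-k+1)\sin\frac{(k-1)\pi}{N+2}}{(N+2)\sin\frac{\pi}{N+2}},$$ and define $P_N(z)=\frac{1}{\sin\frac{2\pi}{N+2}}\sum_{k=1}^N b_k\sin\frac{k\pi}{N+2}\,z^k$. *)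

From Stdlib Require Import Reals.
Open Scope R_scope.

Definition Cplx : Type := (R * R)%type.
Definition Re (z : Cplx) : R := fst z.
Definition Im (z : Cplx) : R := snd z.
Definition C0 : Cplx := (0, 0).
Definition C1 : Cplx := (1, 0).
Definition Cadd (z w : Cplx) : Cplx := (fst z + fst w, snd z + snd w).
Definition Cmul (z w : Cplx) : Cplx :=
  (fst z * fst w - snd z * snd w, fst z * snd w + snd z * fst w).
Definition Cscale (r : R) (z : Cplx) : Cplx := (r * fst z, r * snd z).
Fixpoint Cpow (z : Cplx) (n : nat) : Cplx :=
  match n with O => C1 | S m => Cmul z (Cpow z m) end.
Definition Cmod (z : Cplx) : R := sqrt (fst z ^ 2 + snd z ^ 2).
Definition Cexpi (t : R) : Cplx := (cos t, sin t).

Fixpoint csum_1 (f : nat -> Cplx) (n : nat) : Cplx :=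
  match n with O => C0 | S m => Cadd (csum_1 f m) (f (S m)) end.

Definition bcoef (N k : nat) : R :=
  ((INR N - INR k + 3) * sin ((INR k + 1) * PI / (INR N + 2))
   - (INR N - INR k + 1) * sin ((INR k - 1) * PI / (INR N + 2)))
  / ((INR N + 2) * sin (PI / (INR N + 2))).

Definition PN (N : nat) (z : Cplx) : Cplx :=
  Cscale (/ sin (2 * PI / (INR N + 2)))
    (csum_1 (fun k => Cscale (bcoef N k * sin (INR k * PI / (INR N + 2))) (Cpow z k)) N).

(* Write θ = π/(N+2), q = e^{iθ} and a_k for the k-th coefficient of P_N, so
   that Im P_N(e^{it}) = Σ a_k sin kt and Im P_N(r e^{it}) = Σ a_k r^k sin kt.

   1. Closed form on the circle.  Writing every sine as (w - 1/w)/2i turns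
      a_k sin kt into a combination of the geometric-type terms w^k and k w^k
      with w ∈ {z, q²z, z/q²} (z = e^{it}) and of their conjugates.  These sum
      in closed form, and q^{N+2} = -1 lets one eliminate q^N; what remains is a
      rational identity in q, z and z^N, checked by [field].
   2. Nonnegativity on [0,π]: the closed form is visibly ≥ 0 away from
      t = 2θ, the sum vanishes at t = 0 and t = π, and continuity handles 2θ.
   3. Typically real.  For any real coefficients a_k, Im F(z) (F = Σ a_k z^k)
      satisfies a discrete mean value property on circles (averages over M-th
      roots of unity, M > N).  A minimum principle on the closed upper half disc
      follows: a negative minimum would propagate, circle after circle, down to
      the real axis, where Im F = 0.  Symmetry F(z̄) = conj F(z) gives the lower
      half.  The minimum exists because Σ a_k r^k sin kt is continuous in t and
      Lipschitz in r ∈ [0,1]. *)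

From Pilot Require Import Defs.
From Stdlib Require Import Reals Lra Lia ClassicalEpsilon.
From Coquelicot Require Coquelicot.

Module PN_theory.
Import Coquelicot.Coquelicot.
Open Scope R_scope.

Lemma cos_sin_sq x : cos x ^ 2 + sin x ^ 2 = 1.
Proof. pose proof (sin2_cos2 x) as H. unfold Rsqr in H. nra. Qed.

Lemma cos_lt_1_pos x : 0 < x < 2 * PI -> cos x < 1.
Proof.
  intros H. replace x with (2 * (x / 2)) by field. rewrite cos_2a_sin.
  assert (0 < sin (x / 2)) by (apply sin_gt_0; lra). nra.
Qed.

Lemma cos_lt_1 x : 0 < Rabs x < 2 * PI -> cos x < 1.
Proof.
  intros H. destruct (Rle_or_lt 0 x).
  - rewrite Rabs_right in H by lra. apply cos_lt_1_pos; lra.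
  - rewrite Rabs_left in H by lra. rewrite <- cos_neg. apply cos_lt_1_pos; lra.
Qed.

Lemma sin_INR_PI k : sin (INR k * PI) = 0.
Proof. apply sin_eq_0_1. exists (Z.of_nat k). now rewrite INR_IZR_INZ. Qed.

Open Scope C_scope.

(* Forces an equation to be read in C, so that [ring]/[field] use C's structure. *)
Ltac ceq := match goal with |- ?a = ?b => change (@eq C a b) end.

Lemma Cpow_Defs z n : Defs.Cpow z n = z ^ n.
Proof. induction n as [|n IH]; simpl; [reflexivity | now rewrite IH]. Qed.

Lemma Cscale_RtoC r (w : C) : Cscale r w = RtoC r * w.
Proof. destruct w. unfold Cscale, RtoC, Cmult; simpl. f_equal; ring. Qed.

Lemma Cexpi_mul a b : Cexpi a * Cexpi b = Cexpi (a + b).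
Proof. unfold Cexpi, Cmult; simpl. rewrite cos_plus, sin_plus. f_equal; ring. Qed.

Lemma Cexpi_pow t k : Cexpi t ^ k = Cexpi (INR k * t).
Proof.
  induction k as [|k IH].
  - simpl. unfold Cexpi. now rewrite Rmult_0_l, cos_0, sin_0.
  - rewrite Cpow_S, IH, Cexpi_mul, S_INR. f_equal. ring.
Qed.

Lemma Cexpi_inv t : / Cexpi t = Cexpi (- t).
Proof.
  unfold Cexpi, Cinv; simpl. rewrite cos_neg, sin_neg. pose proof (cos_sin_sq t).
  simpl in H. replace (cos t * (cos t * 1) + sin t * (sin t * 1))%R with 1%R by lra.
  f_equal; field.
Qed.

Lemma Cexpi_minus a b : Cexpi (a - b) = Cexpi a / Cexpi b.
Proof. unfold Cdiv. now rewrite Cexpi_inv, Cexpi_mul. Qed.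

Lemma Cexpi_neq0 t : (Cexpi t : C) <> 0.
Proof.
  intro H. unfold Cexpi in H. injection H as H1 H2. pose proof (cos_sin_sq t).
  rewrite H1, H2 in H. lra.
Qed.

Lemma one_minus_Cexpi_neq0 x : cos x < 1 -> 1 - Cexpi x <> 0.
Proof. intros H E. apply (f_equal fst) in E. unfold Cexpi in E. simpl in E. lra. Qed.

Lemma Cexpi_sub_neq0 x y : 0 < Rabs (x - y) < 2 * PI -> Cexpi x - Cexpi y <> 0.
Proof.
  intros H E. apply Ceq_minus in E.
  apply (one_minus_Cexpi_neq0 (x - y)); [now apply cos_lt_1|].
  rewrite Cexpi_minus, E. ceq. field. apply Cexpi_neq0.
Qed.

Lemma Cexpi_0 : (Cexpi 0 : C) = 1.
Proof. unfold Cexpi. now rewrite cos_0, sin_0. Qed.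

Lemma RtoC_sin x : RtoC (sin x) = (Cexpi x - / Cexpi x) / (2 * Ci).
Proof.
  rewrite Cexpi_inv. unfold Cexpi, Cdiv, Cminus, Copp, Cplus, Cmult, Cinv, Ci, RtoC; simpl.
  rewrite cos_neg, sin_neg. f_equal; field.
Qed.

Lemma RtoC_cos x : RtoC (cos x) = (Cexpi x + / Cexpi x) / 2.
Proof.
  rewrite Cexpi_inv. unfold Cexpi, Cdiv, Cminus, Copp, Cplus, Cmult, Cinv, Ci, RtoC; simpl.
  rewrite cos_neg, sin_neg. f_equal; field.
Qed.

Fixpoint rsum_1 (f : nat -> R) (n : nat) : R :=
  match n with O => 0%R | S m => (rsum_1 f m + f (S m))%R end.

Lemma csum_ext f g n :
  (forall k, (1 <= k <= n)%nat -> f k = g k) -> csum_1 f n = csum_1 g n.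
Proof.
  induction n as [|n IH]; intros H; [reflexivity|].
  change (csum_1 f n + f (S n) = csum_1 g n + g (S n)).
  rewrite IH, H; [reflexivity | lia |]. intros; apply H; lia.
Qed.

Lemma csum_plus f g n : csum_1 (fun k => f k + g k) n = csum_1 f n + csum_1 g n.
Proof.
  induction n as [|n IH]; [change ((0:C) = 0 + 0); ring|].
  change (csum_1 (fun k => f k + g k) n + (f (S n) + g (S n))
          = (csum_1 f n + f (S n)) + (csum_1 g n + g (S n))).
  rewrite IH. ring.
Qed.

Lemma csum_minus f g n : csum_1 (fun k => f k - g k) n = csum_1 f n - csum_1 g n.
Proof.
  induction n as [|n IH]; [change ((0:C) = 0 - 0); ring|].
  change (csum_1 (fun k => f k - g k) n + (f (S n) - g (S n))
          = (csum_1 f n + f (S n)) - (csum_1 g n + g (S n))).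
  rewrite IH. ring.
Qed.

Lemma csum_scal c f n : csum_1 (fun k => c * f k) n = c * csum_1 f n.
Proof.
  induction n as [|n IH]; [change ((0:C) = c * 0); ring|].
  change (csum_1 (fun k => c * f k) n + c * f (S n) = c * (csum_1 f n + f (S n))).
  rewrite IH. ring.
Qed.

Lemma csum_const n : csum_1 (fun _ => (1:C)) n = RtoC (INR n).
Proof.
  induction n as [|n IH]; [reflexivity|].
  change (csum_1 (fun _ => (1:C)) n + 1 = RtoC (INR (S n))).
  now rewrite IH, S_INR, RtoC_plus.
Qed.

Lemma csum_swap (g : nat -> nat -> C) n m :
  csum_1 (fun l => csum_1 (fun k => g k l) n) m
  = csum_1 (fun k => csum_1 (fun l => g k l) m) n.
Proof.
  induction m as [|m IH].
  - induction n as [|n IHn]; [reflexivity|].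
    change ((0:C) = csum_1 (fun k => csum_1 (fun l => g k l) 0) n + 0).
    rewrite <- IHn. change ((0:C) = 0 + 0). ring.
  - change (csum_1 (fun l => csum_1 (fun k => g k l) n) m + csum_1 (fun k => g k (S m)) n
            = csum_1 (fun k => csum_1 (fun l => g k l) m + g k (S m)) n).
    now rewrite IH, csum_plus.
Qed.

Close Scope C_scope.
Lemma rsum_ext f g n :
  (forall k, (1 <= k <= n)%nat -> f k = g k) -> rsum_1 f n = rsum_1 g n.
Proof.
  induction n as [|n IH]; intros H; simpl; [reflexivity|].
  rewrite IH, H; [reflexivity | lia |]. intros; apply H; lia.
Qed.

Lemma rsum_le f g n :
  (forall k, (1 <= k <= n)%nat -> f k <= g k) -> rsum_1 f n <= rsum_1 g n.
Proof.
  induction n as [|n IH]; intros H; simpl; [lra|].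
  assert (f (S n) <= g (S n)) by (apply H; lia).
  assert (rsum_1 f n <= rsum_1 g n) by (apply IH; intros; apply H; lia). lra.
Qed.

Lemma rsum_zero f n : (forall k, (1 <= k <= n)%nat -> f k = 0) -> rsum_1 f n = 0.
Proof.
  intros H. rewrite (rsum_ext f (fun _ => 0)) by exact H. clear H.
  induction n as [|n IH]; simpl; [reflexivity|]. rewrite IH; ring.
Qed.

Lemma rsum_minus f g n : rsum_1 (fun k => f k - g k) n = rsum_1 f n - rsum_1 g n.
Proof. induction n as [|n IH]; simpl; [ring|]. rewrite IH; ring. Qed.

Lemma rsum_opp f n : rsum_1 (fun k => - f k) n = - rsum_1 f n.
Proof. induction n as [|n IH]; simpl; [ring|]. rewrite IH; ring. Qed.

Lemma rsum_scal_r f c n : rsum_1 (fun k => f k * c) n = rsum_1 f n * c.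
Proof. induction n as [|n IH]; simpl; [ring|]. rewrite IH; ring. Qed.

Lemma rsum_const c n : rsum_1 (fun _ => c) n = INR n * c.
Proof.
  induction n as [|n IH]; [simpl; ring|].
  change (rsum_1 (fun _ => c) n + c = INR (S n) * c). rewrite IH, S_INR. ring.
Qed.

Lemma rsum_abs f n : Rabs (rsum_1 f n) <= rsum_1 (fun k => Rabs (f k)) n.
Proof.
  induction n as [|n IH]; simpl; [rewrite Rabs_R0; lra|].
  eapply Rle_trans; [apply Rabs_triang | lra].
Qed.

Lemma rsum_continuity (g : nat -> R -> R) n :
  (forall k, continuity (g k)) -> continuity (fun t => rsum_1 (fun k => g k t) n).
Proof.
  intros H. induction n as [|n IH]; simpl.
  - apply continuity_const. intros x y; reflexivity.
  - apply (continuity_plus (fun t => rsum_1 (fun k => g k t) n) (g (S n))); auto.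
Qed.

Open Scope C_scope.

Lemma Im_csum f n : Im (csum_1 f n) = rsum_1 (fun k => Im (f k)) n.
Proof. induction n as [|n IH]; [reflexivity|]. simpl. now rewrite <- IH. Qed.

Lemma RtoC_rsum f n : RtoC (rsum_1 f n) = csum_1 (fun k => RtoC (f k)) n.
Proof. induction n as [|n IH]; [reflexivity|]. simpl. now rewrite RtoC_plus, IH. Qed.

Lemma geom_sum (w : C) n :
  1 - w <> 0 -> csum_1 (fun k => w ^ k) n = w * (1 - w ^ n) / (1 - w).
Proof.
  intros H. induction n as [|n IH].
  - change ((0:C) = w * (1 - 1) / (1 - w)). field. exact H.
  - change (csum_1 (fun k => w ^ k) n + w ^ S n = w * (1 - w ^ S n) / (1 - w)).
    rewrite IH, Cpow_S. ceq. field. exact H.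
Qed.

Lemma arith_geom_sum (w : C) n : 1 - w <> 0 ->
  csum_1 (fun k => RtoC (INR k) * w ^ k) n
  = w * (1 - (RtoC (INR n) + 1) * w ^ n + RtoC (INR n) * w ^ n * w) / ((1 - w) * (1 - w)).
Proof.
  intros H. induction n as [|n IH].
  - change ((0:C) = w * (1 - (0 + 1) * 1 + 0 * 1 * w) / ((1 - w) * (1 - w))). field. exact H.
  - change (csum_1 (fun k => RtoC (INR k) * w ^ k) n + RtoC (INR (S n)) * w ^ S n
            = w * (1 - (RtoC (INR (S n)) + 1) * w ^ S n + RtoC (INR (S n)) * w ^ S n * w)
              / ((1 - w) * (1 - w))).
    rewrite IH, !Cpow_S, S_INR, RtoC_plus. ceq. field. exact H.
Qed.

Definition Fpoly (a : nat -> R) N (z : C) : C := csum_1 (fun k => RtoC (a k) * z ^ k) N.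
Definition Psi a N z : R := Im (Fpoly a N z).
Definition Phi (a : nat -> R) N r t : R :=
  rsum_1 (fun k => a k * (r ^ k * sin (INR k * t)))%R N.

Lemma Psi_polar a N r t : Psi a N (RtoC r * Cexpi t) = Phi a N r t.
Proof.
  unfold Psi, Fpoly, Phi. rewrite Im_csum. apply rsum_ext. intros k _.
  rewrite Cpow_mult_l, Cexpi_pow, <- RtoC_pow, im_scal_l.
  unfold Cexpi, RtoC, Cmult, Im; simpl. ring.
Qed.

Definition theta N := (PI / (INR N + 2))%R.
Definition acoef N k : R :=
  / sin (2 * PI / (INR N + 2)) * (bcoef N k * sin (INR k * PI / (INR N + 2))).

Lemma PN_Fpoly N z : PN N z = Fpoly (acoef N) N z.
Proof.
  unfold PN, Fpoly, acoef. rewrite Cscale_RtoC.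
  rewrite (csum_ext _ (fun k => RtoC (bcoef N k * sin (INR k * PI / (INR N + 2))) * z ^ k)).
  2:{ intros k _. now rewrite Cscale_RtoC, Cpow_Defs. }
  rewrite <- csum_scal. apply csum_ext. intros k _. rewrite !RtoC_mult. ceq; ring.
Qed.

Lemma Im_PN N z : Defs.Im (PN N z) = Psi (acoef N) N z.
Proof. now rewrite PN_Fpoly. Qed.

Lemma Im_PN_circle N t : Defs.Im (PN N (Cexpi t)) = Phi (acoef N) N 1 t.
Proof.
  rewrite Im_PN, <- Psi_polar. f_equal. unfold RtoC, Cexpi, Cmult; simpl. f_equal; ring.
Qed.

(* Closed forms of Σ_{k=1}^N w^k and Σ_{k=1}^N k w^k, with n standing for N and W for w^N. *)
Definition geom_closed (w W : C) : C := w * (1 - W) / (1 - w).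
Definition arith_geom_closed (n w W : C) : C :=
  w * (1 - (n + 1) * W + n * W * w) / ((1 - w) * (1 - w)).

(* With n = N, q = e^{iθ} and z = e^{it}, Euler's formulas turn a_k sin kt into a
   fixed multiple of expi_term z k - expi_term (1/z) k ([coef_sin_expi] below);
   expi_term mixes the geometric terms w^k, (q²w)^k, (w/q²)^k and k(q²w)^k, k(w/q²)^k. *)
Definition expi_term (n q w : C) (k : nat) : C :=
  (q + /q) / 2 * w ^ k
  + (-(1/4) * ((n + 3) * q - (n + 1) / q)) * (q * q * w) ^ k
  + (1/4) * (q - /q) * (RtoC (INR k) * (q * q * w) ^ k)
  + (-(1/4) * ((n + 3) / q - (n + 1) * q)) * (w / (q * q)) ^ k
  + (1/4) * (/q - q) * (RtoC (INR k) * (w / (q * q)) ^ k).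

Definition expi_sum (n q w W : C) : C :=
  (q + /q) / 2 * geom_closed w W
  + (-(1/4) * ((n + 3) * q - (n + 1) / q)) * geom_closed (q * q * w) (/(q * q * q * q) * W)
  + (1/4) * (q - /q) * arith_geom_closed n (q * q * w) (/(q * q * q * q) * W)
  + (-(1/4) * ((n + 3) / q - (n + 1) * q)) * geom_closed (w / (q * q)) (W * (q * q * q * q))
  + (1/4) * (/q - q) * arith_geom_closed n (w / (q * q)) (W * (q * q * q * q)).

(* Summation uses q^N = -1/q², i.e. q^{N+2} = -1. *)
Lemma expi_sum_eq (q w : C) N : q <> 0 -> w <> 0 -> q ^ N = - / (q * q) ->
  1 - w <> 0 -> 1 - q * q * w <> 0 -> 1 - w / (q * q) <> 0 ->
  csum_1 (fun k => expi_term (RtoC (INR N)) q w k) N = expi_sum (RtoC (INR N)) q w (w ^ N).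
Proof.
  intros Hq Hw HqN H1 H2 H3. unfold expi_term.
  rewrite !csum_plus, !csum_scal, !geom_sum, !arith_geom_sum by assumption.
  assert (E1 : (q * q * w) ^ N = /(q * q * q * q) * w ^ N).
  { rewrite !Cpow_mult_l, HqN. ceq. field. exact Hq. }
  assert (E2 : (w / (q * q)) ^ N = w ^ N * (q * q * q * q)).
  { unfold Cdiv. rewrite !Cpow_mult_l, Cpow_inv, Cpow_mult_l, HqN.
    - ceq. field. repeat split; repeat apply Cmult_neq_0; auto.
    - now apply Cmult_neq_0. }
  now rewrite E1, E2.
Qed.

Lemma Cminus_sym_neq0 (a b : C) : a - b <> 0 -> b - a <> 0.
Proof. intros H E. apply H. replace (a - b) with (- (b - a)) by ring. rewrite E. ring. Qed.

(* The two quadratic denominators that [field] produces from 1 - cos t and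
   cos t - cos 2θ, written with z = e^{it} and q² = e^{2iθ}. *)
Lemma quadratic_denominators_neq0 (q z : C) : 1 - z <> 0 -> 1 - q * q * z <> 0 -> z - q * q <> 0 ->
  (z * z + 1) * (q * q) - (q * q * (q * q) + 1) * z <> 0 /\ z * 2 - (z * z + 1) <> 0.
Proof.
  intros H1 H2 H3.
  assert (Hm1 : (-1 : C) <> 0) by (intro E; apply (f_equal fst) in E; simpl in E; lra).
  split.
  - replace ((z * z + 1) * (q * q) - (q * q * (q * q) + 1) * z)
      with (-1 * (1 - q * q * z) * (z - q * q)) by ring.
    now repeat apply Cmult_neq_0.
  - replace (z * 2 - (z * z + 1)) with (-1 * ((1 - z) * (1 - z))) by ring.
    now repeat apply Cmult_neq_0.
Qed.

(* The rational identity behind the closed form: with Z = z^N, the antisymmetrised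
   sum equals the complexified right-hand side of the theorem. *)
Lemma expi_sum_identity (n q z Z : C) : q <> 0 -> z <> 0 -> Z <> 0 ->
  1 - z <> 0 -> 1 - q * q * z <> 0 -> z - q * q <> 0 -> q * q - 1 <> 0 ->
  q * q * (q * q) - 1 <> 0 -> n + 2 <> 0 ->
  -4 * (expi_sum n q z Z - expi_sum n q (/z) (/Z)) / ((n + 2) * (q - /q) * (q * q - /(q * q)))
  = (1 - (q * q + /(q * q)) / 2) / ((n + 2) * (1 - (z + /z) / 2)) *
    ((z - /z) * ((2 - Z * z * z - /(Z * z * z)) / 4)
     / (((z + /z) / 2 - (q * q + /(q * q)) / 2) * ((z + /z) / 2 - (q * q + /(q * q)) / 2))).
Proof.
  intros Hq Hz HZ H1 H2 H3 H4 H5 Hn.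
  destruct (quadratic_denominators_neq0 q z H1 H2 H3) as [D1 D2].
  pose proof (Cminus_sym_neq0 _ _ H1). pose proof (Cminus_sym_neq0 _ _ H3).
  assert (z * (q * q) - 1 <> 0) by (rewrite Cmult_comm; now apply Cminus_sym_neq0).
  unfold expi_sum, geom_closed, arith_geom_closed. field. repeat split; try assumption.
Qed.

Lemma theta_bounds N : (1 <= N)%nat -> 0 < theta N <= PI / 3.
Proof.
  intros H. unfold theta. assert (1 <= INR N) by (apply (le_INR 1); exact H).
  pose proof PI_RGT_0. split; [apply Rdiv_lt_0_compat; lra|].
  apply Rmult_le_compat_l; [lra|]. apply Rinv_le_contravar; lra.
Qed.

Lemma two_theta N : (2 * PI / (INR N + 2))%R = (2 * theta N)%R.
Proof. unfold theta, Rdiv. ring. Qed.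

Definition circle_value N t : R :=
  (1 - cos (2 * PI / (INR N + 2))) / ((INR N + 2) * (1 - cos t)) *
  (sin t * (sin ((INR N + 2) * t / 2)) ^ 2 / (cos t - cos (2 * PI / (INR N + 2))) ^ 2).

Section CircleSum.

Variable N : nat.
Hypothesis HN : (1 <= N)%nat.

Local Notation n := (RtoC (INR N)).
Local Notation q := (Cexpi (theta N) : C).

Lemma INR_N_2_neq0 : (INR N + 2 <> 0)%R.
Proof. pose proof (pos_INR N). lra. Qed.

Lemma qq_Cexpi : q * q = Cexpi (2 * theta N).
Proof. rewrite Cexpi_mul. f_equal. ring. Qed.

Lemma q_pow_N : q ^ N = - / (q * q).
Proof.
  assert (E : q ^ N * (q * q) = -1).
  { rewrite Cexpi_pow, qq_Cexpi, Cexpi_mul.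
    replace (INR N * theta N + 2 * theta N)%R with PI
      by (unfold theta; field; exact INR_N_2_neq0).
    unfold Cexpi. now rewrite cos_PI, sin_PI. }
  assert (Hq : q <> 0) by apply Cexpi_neq0.
  replace (q ^ N) with (q ^ N * (q * q) / (q * q)) by (ceq; field; exact Hq).
  rewrite E. ceq. field. exact Hq.
Qed.

(* Bounds |x - y| ∈ (0, 2π) for the arguments compared in [Cexpi_sub_neq0]. *)
Local Ltac arg_bounds :=
  pose proof (theta_bounds N HN); pose proof PI_RGT_0;
  split; [apply Rabs_pos_lt; lra | apply Rabs_def1; lra].

(* q² and q⁴ differ from 1 since 0 < 2θ < 4θ < 2π. *)
Lemma qq_minus_one : q * q - 1 <> 0.
Proof. rewrite qq_Cexpi, <- Cexpi_0. apply Cexpi_sub_neq0. arg_bounds. Qed.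

Lemma qqqq_minus_one : q * q * (q * q) - 1 <> 0.
Proof.
  rewrite qq_Cexpi, Cexpi_mul, <- Cexpi_0. apply Cexpi_sub_neq0. arg_bounds.
Qed.

Lemma sin_theta_neq0 : sin (theta N) <> 0%R.
Proof. pose proof (theta_bounds N HN). pose proof PI_RGT_0. apply Rgt_not_eq, sin_gt_0; lra. Qed.

Lemma sin_2theta_neq0 : sin (2 * theta N) <> 0%R.
Proof. pose proof (theta_bounds N HN). pose proof PI_RGT_0. apply Rgt_not_eq, sin_gt_0; lra. Qed.

Lemma n_plus_2_neq0 : n + 2 <> 0.
Proof. intro E. apply INR_N_2_neq0, RtoC_inj. now rewrite RtoC_plus. Qed.

Lemma coef_sin_expi k t :
  RtoC (acoef N k * sin (INR k * t))
  = /(2 * Ci) * (-4 / ((n + 2) * (q - /q) * (q * q - /(q * q))))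
    * (expi_term n q (Cexpi t) k - expi_term n q (/ Cexpi t) k).
Proof.
  pose proof INR_N_2_neq0 as HN2.
  unfold acoef, bcoef.
  replace ((INR k + 1) * PI / (INR N + 2))%R with (INR k * theta N + theta N)%R
    by (unfold theta; field; exact HN2).
  replace ((INR k - 1) * PI / (INR N + 2))%R with (INR k * theta N - theta N)%R
    by (unfold theta; field; exact HN2).
  replace (INR k * PI / (INR N + 2))%R with (INR k * theta N)%R
    by (unfold theta; field; exact HN2).
  rewrite two_theta. fold (theta N).
  assert (Hd : ((INR N + 2) * sin (theta N) <> 0)%R)
    by (apply Rmult_integral_contrapositive; split; [exact HN2 | exact sin_theta_neq0]).
  pose proof sin_2theta_neq0.
  repeat (first [rewrite RtoC_mult | rewrite RtoC_plus | rewrite RtoC_minus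
                | (rewrite RtoC_div; [|assumption]) | (rewrite RtoC_inv; [|assumption])]).
  rewrite !RtoC_sin, <- qq_Cexpi, <- !Cexpi_mul, !Cexpi_minus, <- !Cexpi_pow.
  set (z := Cexpi t : C).
  assert (Hq : q <> 0) by apply Cexpi_neq0.
  assert (Hz : z <> 0) by apply Cexpi_neq0.
  pose proof n_plus_2_neq0.
  unfold expi_term, Cdiv.
  rewrite !Cpow_mult_l, !Cpow_inv by (try apply Cmult_neq_0; assumption).
  rewrite !Cpow_mult_l.
  assert (HQ : q ^ k <> 0) by (apply Cpow_nz; exact Hq).
  assert (HW : z ^ k <> 0) by (apply Cpow_nz; exact Hz).
  set (Q := q ^ k) in *. set (W := z ^ k) in *. clearbody Q W z.
  ceq. field. repeat split; auto using qq_minus_one, qqqq_minus_one, Ci_nz.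
Qed.

Section AtPoint.

Variable t : R.
Hypothesis Ht : 0 < t < PI.
Hypothesis Ht2 : t <> (2 * theta N)%R.

Local Notation z := (Cexpi t : C).

Lemma one_minus_z : 1 - z <> 0.
Proof. rewrite <- Cexpi_0. apply Cexpi_sub_neq0. arg_bounds. Qed.

Lemma one_minus_inv_z : 1 - / z <> 0.
Proof. rewrite <- Cexpi_0, Cexpi_inv. apply Cexpi_sub_neq0. arg_bounds. Qed.

Lemma one_minus_qqz : 1 - q * q * z <> 0.
Proof. rewrite <- Cexpi_0, qq_Cexpi, Cexpi_mul. apply Cexpi_sub_neq0. arg_bounds. Qed.

Lemma one_minus_z_qq : 1 - z / (q * q) <> 0.
Proof. rewrite <- Cexpi_0, qq_Cexpi, <- Cexpi_minus. apply Cexpi_sub_neq0. arg_bounds. Qed.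

Lemma one_minus_qq_z : 1 - q * q * / z <> 0.
Proof.
  rewrite <- Cexpi_0, qq_Cexpi, Cexpi_inv, Cexpi_mul. apply Cexpi_sub_neq0. arg_bounds.
Qed.

Lemma one_minus_inv_z_qq : 1 - / z / (q * q) <> 0.
Proof.
  rewrite <- Cexpi_0, qq_Cexpi, Cexpi_inv, <- Cexpi_minus. apply Cexpi_sub_neq0. arg_bounds.
Qed.

Lemma z_minus_qq : z - q * q <> 0.
Proof. rewrite qq_Cexpi. apply Cexpi_sub_neq0. arg_bounds. Qed.

Lemma circle_sum_complex :
  RtoC (rsum_1 (fun k => acoef N k * sin (INR k * t))%R N)
  = /(2 * Ci) * (-4 * (expi_sum n q z (z ^ N) - expi_sum n q (/z) (/z ^ N))
                 / ((n + 2) * (q - /q) * (q * q - /(q * q)))).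
Proof.
  assert (Hq : q <> 0) by apply Cexpi_neq0.
  assert (Hz : z <> 0) by apply Cexpi_neq0.
  assert (Hiz : /z <> 0) by (rewrite Cexpi_inv; apply Cexpi_neq0).
  rewrite RtoC_rsum, (csum_ext _ _ _ (fun k _ => coef_sin_expi k t)).
  rewrite csum_scal, csum_minus, !expi_sum_eq, Cpow_inv;
    auto using q_pow_N, one_minus_z, one_minus_inv_z, one_minus_qqz, one_minus_z_qq,
      one_minus_qq_z, one_minus_inv_z_qq.
  ceq. unfold Cdiv. ring.
Qed.

Lemma circle_value_complex :
  RtoC (circle_value N t)
  = /(2 * Ci) * ((1 - (q * q + /(q * q)) / 2) / ((n + 2) * (1 - (z + /z) / 2)) *
    ((z - /z) * ((2 - z ^ N * z * z - /(z ^ N * z * z)) / 4)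
     / (((z + /z) / 2 - (q * q + /(q * q)) / 2) * ((z + /z) / 2 - (q * q + /(q * q)) / 2)))).
Proof.
  pose proof (theta_bounds N HN). pose proof PI_RGT_0. pose proof INR_N_2_neq0.
  unfold circle_value. rewrite two_theta.
  assert (Hsin : (sin ((INR N + 2) * t / 2) ^ 2 = (1 - cos (INR (N + 2) * t)) / 2)%R).
  { rewrite plus_INR. change (INR 2) with 2%R.
    replace ((INR N + 2) * t)%R with (2 * ((INR N + 2) * t / 2))%R at 2 by field.
    rewrite cos_2a_sin. field. }
  assert (Hct : cos t <> cos (2 * theta N)) by (intro E; apply Ht2, cos_inj; lra).
  assert (Hct1 : (1 - cos t <> 0)%R) by (pose proof (cos_lt_1_pos t); lra).
  assert (D1 : ((INR N + 2) * (1 - cos t) <> 0)%R) by (apply Rmult_integral_contrapositive; auto).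
  assert (D2 : ((cos t - cos (2 * theta N)) ^ 2 <> 0)%R) by (apply pow_nonzero; lra).
  rewrite Hsin.
  repeat (first [rewrite RtoC_mult | rewrite RtoC_plus | rewrite RtoC_minus | rewrite RtoC_pow
                | (rewrite RtoC_div; [|first [assumption | lra]])
                | (rewrite RtoC_inv; [|assumption])]).
  rewrite !RtoC_cos, !RtoC_sin, <- qq_Cexpi, <- (Cexpi_pow t (N + 2)), Cpow_add_r.
  assert (F1 : 1 - (z + / z) / 2 <> 0).
  { intro E. apply Hct1, RtoC_inj. now rewrite RtoC_minus, RtoC_cos. }
  assert (F2 : (z + / z) / 2 - (q * q + / (q * q)) / 2 <> 0).
  { intro E. apply Hct, RtoC_inj. apply Ceq_minus in E. now rewrite !RtoC_cos, <- qq_Cexpi. }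
  assert (Hz : z <> 0) by apply Cexpi_neq0.
  assert (HZ : z ^ N <> 0) by (apply Cpow_nz; exact Hz).
  destruct (quadratic_denominators_neq0 q z one_minus_z one_minus_qqz z_minus_qq) as [D3 D4].
  ceq. field. repeat split; auto using Ci_nz, Cexpi_neq0, n_plus_2_neq0.
Qed.

Lemma circle_sum_closed_form :
  rsum_1 (fun k => acoef N k * sin (INR k * t))%R N = circle_value N t.
Proof.
  apply RtoC_inj. rewrite circle_sum_complex, circle_value_complex.
  assert (Hz : z <> 0) by apply Cexpi_neq0.
  rewrite <- expi_sum_identity by auto using Cexpi_neq0, Cpow_nz, one_minus_z,
    one_minus_qqz, z_minus_qq, qq_minus_one, qqqq_minus_one, n_plus_2_neq0.
  reflexivity.
Qed.

End AtPoint.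
End CircleSum.

Close Scope C_scope.

Section PolarSums.

Variables (a : nat -> R) (N : nat).

Lemma Phi_continuity r : continuity (Phi a N r).
Proof.
  unfold Phi. apply (rsum_continuity (fun k t => a k * (r ^ k * sin (INR k * t)))).
  intros k. reg.
Qed.

Lemma Phi_at_radius_1 t : Phi a N 1 t = rsum_1 (fun k => a k * sin (INR k * t)) N.
Proof. unfold Phi. apply rsum_ext. intros. rewrite pow1. ring. Qed.

Lemma Phi_at_0 r : Phi a N r 0 = 0.
Proof. unfold Phi. apply rsum_zero. intros k _. rewrite Rmult_0_r, sin_0. ring. Qed.

Lemma Phi_at_PI r : Phi a N r PI = 0.
Proof. unfold Phi. apply rsum_zero. intros k _. rewrite sin_INR_PI. ring. Qed.

Lemma Phi_at_center t : Phi a N 0 t = 0.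
Proof. unfold Phi. apply rsum_zero. intros k Hk. rewrite pow_i by lia. ring. Qed.

End PolarSums.

Lemma nonneg_from_right (f : R -> R) x0 b :
  x0 < b -> continuity_pt f x0 -> (forall x, x0 < x < b -> 0 <= f x) -> 0 <= f x0.
Proof.
  intros Hb Hc Hpos. destruct (Rle_or_lt 0 (f x0)) as [|Hneg]; [assumption|].
  destruct (Hc (- f x0) ltac:(lra)) as [d [Hd Hnear]].
  set (x := x0 + Rmin (d / 2) ((b - x0) / 2)).
  assert (Hm1 : 0 < Rmin (d / 2) ((b - x0) / 2)) by (apply Rmin_glb_lt; lra).
  pose proof (Rmin_l (d / 2) ((b - x0) / 2)). pose proof (Rmin_r (d / 2) ((b - x0) / 2)).
  assert (Hx : 0 <= f x) by (apply Hpos; unfold x; lra).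
  assert (Hdist : Rabs (f x - f x0) < - f x0).
  { apply Hnear. split; [split; [exact I | unfold x; intro; lra]|].
    simpl. unfold R_dist, x. rewrite Rabs_right; lra. }
  rewrite Rabs_right in Hdist; lra.
Qed.

Lemma circle_value_nonneg N t : (1 <= N)%nat -> 0 < t < PI -> t <> 2 * theta N ->
  0 <= circle_value N t.
Proof.
  intros HN Ht Hne. pose proof (theta_bounds N HN) as Hth. pose proof PI_RGT_0.
  unfold circle_value. rewrite two_theta.
  assert (HN2 : 0 < INR N + 2) by (pose proof (pos_INR N); lra).
  assert (Hct : cos t <> cos (2 * theta N)) by (intro E; apply Hne, cos_inj; lra).
  apply Rmult_le_pos.
  - apply Rdiv_le_0_compat; [pose proof (COS_bound (2 * theta N)); lra|].
    apply Rmult_lt_0_compat; [lra|]. pose proof (cos_lt_1_pos t). lra.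
  - apply Rdiv_le_0_compat; [|apply pow2_gt_0; lra].
    apply Rmult_le_pos; [left; apply sin_gt_0; lra | apply pow2_ge_0].
Qed.

Lemma circle_nonneg N : (1 <= N)%nat -> forall t, 0 <= t <= PI -> 0 <= Phi (acoef N) N 1 t.
Proof.
  intros HN. pose proof (theta_bounds N HN) as Hth. pose proof PI_RGT_0.
  assert (Hgen : forall t, 0 < t < PI -> t <> 2 * theta N -> 0 <= Phi (acoef N) N 1 t).
  { intros t Ht Hne. rewrite Phi_at_radius_1, circle_sum_closed_form by assumption.
    now apply circle_value_nonneg. }
  intros t Ht.
  destruct (Req_dec t 0) as [->|H0]; [rewrite Phi_at_0; lra|].
  destruct (Req_dec t PI) as [->|HPI]; [rewrite Phi_at_PI; lra|].
  destruct (Req_dec t (2 * theta N)) as [->|Hne]; [|apply Hgen; lra].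
  apply (nonneg_from_right _ _ PI); [lra | apply Phi_continuity|].
  intros x Hx. apply Hgen; lra.
Qed.

(* For each r the minimum over t
   exists by continuity; the resulting minimum value is Lipschitz in r, hence
   continuous, and has a minimum over [0,1] in turn. *)

Lemma pow_lipschitz r s k : 0 <= r <= 1 -> 0 <= s <= 1 ->
  Rabs (r ^ k - s ^ k) <= INR k * Rabs (r - s).
Proof.
  intros Hr Hs. induction k as [|k IH].
  - simpl. replace (1 - 1) with 0 by ring. rewrite Rabs_R0. lra.
  - rewrite S_INR. simpl.
    replace (r * r ^ k - s * s ^ k) with (r * (r ^ k - s ^ k) + s ^ k * (r - s)) by ring.
    eapply Rle_trans; [apply Rabs_triang|]. rewrite !Rabs_mult.
    assert (Rabs r <= 1) by (rewrite Rabs_right; lra).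
    assert (Rabs (s ^ k) <= 1).
    { rewrite Rabs_right by (apply Rle_ge, pow_le; lra).
      rewrite <- (pow1 k). apply pow_incr; lra. }
    pose proof (Rabs_pos (r ^ k - s ^ k)). pose proof (Rabs_pos (r - s)). nra.
Qed.

Definition clamp r := Rmax 0 (Rmin 1 r).

Lemma clamp_range r : 0 <= clamp r <= 1.
Proof. unfold clamp, Rmax, Rmin. repeat destruct Rle_dec; lra. Qed.

Lemma clamp_id r : 0 <= r <= 1 -> clamp r = r.
Proof. intros. unfold clamp, Rmax, Rmin. repeat destruct Rle_dec; lra. Qed.

Lemma clamp_lipschitz r s : Rabs (clamp r - clamp s) <= Rabs (r - s).
Proof.
  unfold clamp, Rmax, Rmin. repeat destruct Rle_dec;
    apply Rabs_le; split; unfold Rabs; destruct Rcase_abs; lra.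
Qed.

Lemma lipschitz_continuity (g : R -> R) L : 0 <= L ->
  (forall x y, Rabs (g x - g y) <= L * Rabs (x - y)) -> continuity g.
Proof.
  intros HL H x eps Heps. exists (eps / (L + 1)). split; [apply Rdiv_lt_0_compat; lra|].
  intros y [_ Hy]. simpl in *. unfold R_dist in *. eapply Rle_lt_trans; [apply H|].
  apply Rle_lt_trans with ((L + 1) * Rabs (y - x)); [pose proof (Rabs_pos (y - x)); nra|].
  apply Rmult_lt_reg_l with (/ (L + 1)); [apply Rinv_0_lt_compat; lra|].
  rewrite <- Rmult_assoc, Rinv_l by lra. rewrite Rmult_1_l. unfold Rdiv in Hy. lra.
Qed.

Section GlobalMinimum.

Variables (a : nat -> R) (N : nat).

Definition lip_const : R := rsum_1 (fun k => Rabs (a k) * INR k) N.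

Lemma lip_const_nonneg : 0 <= lip_const.
Proof.
  unfold lip_const. rewrite <- (rsum_zero (fun _ => 0) N) by auto. apply rsum_le.
  intros. apply Rmult_le_pos; [apply Rabs_pos | apply pos_INR].
Qed.

Lemma Phi_lipschitz r s t : 0 <= r <= 1 -> 0 <= s <= 1 ->
  Rabs (Phi a N r t - Phi a N s t) <= lip_const * Rabs (r - s).
Proof.
  intros Hr Hs. unfold Phi, lip_const. rewrite <- rsum_minus, <- rsum_scal_r.
  eapply Rle_trans; [apply rsum_abs|]. apply rsum_le. intros k _.
  replace (a k * (r ^ k * sin (INR k * t)) - a k * (s ^ k * sin (INR k * t)))
    with (a k * ((r ^ k - s ^ k) * sin (INR k * t))) by ring.
  rewrite !Rabs_mult, Rmult_assoc. apply Rmult_le_compat_l; [apply Rabs_pos|].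
  pose proof (pow_lipschitz r s k Hr Hs).
  assert (Rabs (sin (INR k * t)) <= 1) by apply Rabs_le, SIN_bound.
  pose proof (Rabs_pos (r ^ k - s ^ k)). pose proof (Rabs_pos (sin (INR k * t))).
  pose proof (Rabs_pos (r - s)). pose proof (pos_INR k). nra.
Qed.

Lemma argmin_in_t r :
  { tm | 0 <= tm <= PI /\ forall t, 0 <= t <= PI -> Phi a N r tm <= Phi a N r t }.
Proof.
  apply constructive_indefinite_description.
  destruct (continuity_ab_min (Phi a N r) 0 PI) as [tm [H1 H2]].
  - pose proof PI_RGT_0; lra.
  - intros c _. apply Phi_continuity.
  - exists tm. now split.
Qed.

(* The minimum over t ∈ [0,π] at radius clamp r; clamping makes it a function on
   all of R, as [continuity_ab_min] requires continuity at the endpoints. *)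
Definition min_in_t r : R := Phi a N (clamp r) (proj1_sig (argmin_in_t (clamp r))).

Lemma min_in_t_lipschitz r s : Rabs (min_in_t r - min_in_t s) <= lip_const * Rabs (r - s).
Proof.
  assert (K : forall r s, min_in_t s <= min_in_t r + lip_const * Rabs (r - s)).
  { intros r0 s0. unfold min_in_t.
    destruct (argmin_in_t (clamp r0)) as [t1 [Ht1 H1]].
    destruct (argmin_in_t (clamp s0)) as [t2 [Ht2 H2]]. simpl.
    pose proof (H2 t1 Ht1).
    pose proof (Phi_lipschitz (clamp r0) (clamp s0) t1 (clamp_range r0) (clamp_range s0)) as L.
    pose proof (clamp_lipschitz r0 s0). pose proof lip_const_nonneg.
    apply Rabs_le_between in L.
    assert (lip_const * Rabs (clamp r0 - clamp s0) <= lip_const * Rabs (r0 - s0))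
      by (apply Rmult_le_compat_l; assumption).
    lra. }
  apply Rabs_le. pose proof (K r s). pose proof (K s r).
  rewrite Rabs_minus_sym in H0. lra.
Qed.

Lemma Phi_global_min : exists r0 t0, 0 <= r0 <= 1 /\ 0 <= t0 <= PI /\
  forall r t, 0 <= r <= 1 -> 0 <= t <= PI -> Phi a N r0 t0 <= Phi a N r t.
Proof.
  destruct (continuity_ab_min min_in_t 0 1) as [r0 [Hmin Hr0]]; [lra| |].
  { intros c _. apply (lipschitz_continuity _ lip_const lip_const_nonneg min_in_t_lipschitz). }
  exists r0, (proj1_sig (argmin_in_t r0)).
  destruct (argmin_in_t r0) as [t0 [Ht0 H0]] eqn:E0. simpl.
  split; [exact Hr0|]. split; [exact Ht0|]. intros r t Hr Ht.
  specialize (Hmin r Hr). unfold min_in_t in Hmin. rewrite !clamp_id in Hmin by assumption.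
  rewrite E0 in Hmin. simpl in Hmin.
  destruct (argmin_in_t r) as [t1 [Ht1 H1]]. simpl in Hmin.
  specialize (H1 t Ht). lra.
Qed.

End GlobalMinimum.

Definition root_unity M : C := Cexpi (2 * PI / INR M).

Open Scope C_scope.

Lemma root_unity_pow_M M : (0 < M)%nat -> root_unity M ^ M = 1.
Proof.
  intros H. unfold root_unity. rewrite Cexpi_pow.
  replace (INR M * (2 * PI / INR M))%R with (2 * PI)%R by (field; apply not_0_INR; lia).
  unfold Cexpi. now rewrite cos_2PI, sin_2PI.
Qed.

Lemma root_unity_pow_neq1 M i : (1 <= i < M)%nat -> 1 - root_unity M ^ i <> 0.
Proof.
  intros H. unfold root_unity. rewrite Cexpi_pow, <- Cexpi_0. apply Cexpi_sub_neq0.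
  assert (0 < INR M)%R by (apply lt_0_INR; lia).
  assert (1 <= INR i)%R by (apply (le_INR 1); lia).
  assert (INR i < INR M)%R by (apply lt_INR; lia). pose proof PI_RGT_0.
  assert (E : (INR i * (2 * PI / INR M) = 2 * PI * (INR i / INR M))%R) by (field; lra).
  assert (Hfrac : (0 < INR i / INR M < 1)%R).
  { split; [apply Rdiv_lt_0_compat; lra|].
    apply (Rmult_lt_reg_r (INR M)); [lra|]. unfold Rdiv.
    rewrite Rmult_assoc, Rinv_l by lra. lra. }
  rewrite Rminus_0_l, Rabs_Ropp, E, Rabs_right by nra. nra.
Qed.

(* Σ_l (ω^l)^i (c + ρω^l)^k vanishes for 0 < i, and equals M c^k for i = 0,
   whenever k + i < M: expand (c + ρω^l)^{k+1} once and use Σ_l ω^{lj} = 0 for 0 < j < M. *)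
Lemma root_power_sum M (c : C) (rho : R) k : forall i, (k + i < M)%nat ->
  csum_1 (fun l => (root_unity M ^ l) ^ i * (c + RtoC rho * root_unity M ^ l) ^ k) M
  = if Nat.eqb i 0 then RtoC (INR M) * c ^ k else (0 : C).
Proof.
  set (w := root_unity M).
  induction k as [|k IH]; intros i Hki.
  - rewrite (csum_ext _ (fun l => (w ^ i) ^ l)).
    2:{ intros l _. rewrite <- !Cpow_mult_r, Nat.mul_comm. simpl Cpow at 2. ceq; ring. }
    destruct (Nat.eqb_spec i 0) as [->|Hi].
    + rewrite (csum_ext _ (fun _ => (1 : C))) by (intros; apply Cpow_1_l).
      rewrite csum_const. simpl. ceq; ring.
    + assert (Hw : w ^ M = 1) by (apply root_unity_pow_M; lia).
      rewrite geom_sum by (apply root_unity_pow_neq1; lia).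
      rewrite <- Cpow_mult_r, Nat.mul_comm, Cpow_mult_r, Hw, Cpow_1_l.
      ceq. field. apply root_unity_pow_neq1; lia.
  - rewrite (csum_ext _ (fun l => c * ((w ^ l) ^ i * (c + RtoC rho * w ^ l) ^ k)
                               + RtoC rho * ((w ^ l) ^ S i * (c + RtoC rho * w ^ l) ^ k))).
    2:{ intros l _. rewrite !Cpow_S. ceq; ring. }
    rewrite csum_plus, !csum_scal, !IH by lia.
    simpl (Nat.eqb (S i) 0). destruct (Nat.eqb i 0); rewrite ?Cpow_S; ceq; ring.
Qed.

Lemma mean_value a N M (c : C) (rho : R) : (N < M)%nat ->
  csum_1 (fun l => Fpoly a N (c + RtoC rho * root_unity M ^ l)) M = RtoC (INR M) * Fpoly a N c.
Proof.
  intros H. unfold Fpoly. rewrite csum_swap, <- csum_scal. apply csum_ext. intros k Hk.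
  rewrite csum_scal.
  pose proof (root_power_sum M c rho k 0 ltac:(lia)) as E. simpl Nat.eqb in E.
  rewrite (csum_ext _ (fun l => (c + RtoC rho * root_unity M ^ l) ^ k)) in E
    by (intros l _; simpl Cpow at 1; ceq; ring).
  rewrite E. ceq; ring.
Qed.

Close Scope C_scope.

Lemma rsum_nonneg_eq0 g n : (forall k, (1 <= k <= n)%nat -> 0 <= g k) ->
  rsum_1 g n = 0 -> forall k, (1 <= k <= n)%nat -> g k = 0.
Proof.
  induction n as [|n IH]; intros Hpos Hsum k Hk; [lia|].
  assert (Hrest : 0 <= rsum_1 g n).
  { rewrite <- (rsum_zero (fun _ => 0) n) by auto. apply rsum_le. intros; apply Hpos; lia. }
  assert (Hlast : 0 <= g (S n)) by (apply Hpos; lia).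
  simpl in Hsum.
  destruct (Nat.eq_dec k (S n)) as [->|Hne]; [lra|].
  apply IH; [intros; apply Hpos; lia | lra | lia].
Qed.

Section MinimumPrinciple.

Variables (a : nat -> R) (N : nat).

Lemma Psi_real_axis x : Psi a N (x, 0) = 0.
Proof.
  unfold Psi, Fpoly. rewrite Im_csum. apply rsum_zero. intros k _.
  change (x, 0) with (RtoC x). rewrite <- RtoC_pow, <- RtoC_mult. apply im_RtoC.
Qed.

Lemma Psi_conj z : Psi a N (Cconj z) = - Psi a N z.
Proof.
  unfold Psi, Fpoly. rewrite !Im_csum, <- rsum_opp. apply rsum_ext. intros k _.
  rewrite <- Cpow_conj. destruct (z ^ k)%C as [u v]. unfold Cconj, RtoC, Cmult, Im; simpl. ring.
Qed.

Lemma upper_half_disc_polar x y : x ^ 2 + y ^ 2 <= 1 -> 0 <= y ->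
  exists r t, 0 <= r <= 1 /\ 0 <= t <= PI /\ ((x, y) : C) = (RtoC r * Cexpi t)%C.
Proof.
  intros H Hy. set (r := sqrt (x ^ 2 + y ^ 2)).
  assert (Hr2 : r * r = x ^ 2 + y ^ 2) by (apply sqrt_sqrt; nra).
  assert (Hr0 : 0 <= r) by apply sqrt_pos.
  assert (Hr1 : r <= 1) by (rewrite <- sqrt_1; apply sqrt_le_1_alt; lra).
  destruct (Req_dec r 0) as [E|E].
  - exists 0, 0. split; [lra|]. split; [pose proof PI_RGT_0; lra|].
    assert (x = 0) by nra. assert (y = 0) by nra. subst x y.
    unfold RtoC, Cexpi, Cmult; simpl. f_equal; ring.
  - assert (Hr : 0 < r) by lra.
    assert (Hx : -1 <= x / r <= 1).
    { split; apply (Rmult_le_reg_r r); auto; unfold Rdiv;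
        rewrite Rmult_assoc, Rinv_l, Rmult_1_r by lra; nra. }
    exists r, (acos (x / r)). split; [lra|]. split; [apply acos_bound|].
    unfold RtoC, Cexpi, Cmult; simpl. rewrite cos_acos, sin_acos by assumption.
    assert (Hs : sqrt (1 - (x / r)²) = y / r).
    { replace (1 - (x / r)²) with ((y / r)²).
      2:{ unfold Rsqr. apply (Rmult_eq_reg_r (r * r)); [|nra].
          replace (y / r * (y / r) * (r * r)) with (y * y) by (field; lra).
          replace ((1 - x / r * (x / r)) * (r * r)) with (r * r - x * x) by (field; lra). nra. }
      apply sqrt_Rsqr. apply Rdiv_le_0_compat; lra. }
    rewrite Hs. f_equal; field; lra.
Qed.

Lemma half_disc_min : exists r0 t0, 0 <= r0 <= 1 /\ 0 <= t0 <= PI /\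
  forall x y, x ^ 2 + y ^ 2 <= 1 -> 0 <= y -> Phi a N r0 t0 <= Psi a N (x, y).
Proof.
  destruct (Phi_global_min a N) as [r0 [t0 [Hr0 [Ht0 Hmin]]]].
  exists r0, t0. split; [exact Hr0|]. split; [exact Ht0|]. intros x y Hxy Hy.
  destruct (upper_half_disc_polar x y Hxy Hy) as [r [t [Hr [Ht ->]]]].
  rewrite Psi_polar. now apply Hmin.
Qed.

(* One step of the propagation: if the minimum mu of Psi over the half disc is
   attained at (x, y), and the circle of radius rho ≤ y around (x, y) stays in the
   half disc, then mu is also attained at the bottom point (x, y - rho) of that
   circle.  Indeed by the mean value property the values of Psi at the points
   (x, y) + rho ω^l average to mu, so all equal mu; for M = 4(N+1) the point
   l = 3(N+1) is (x, y - rho). *)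
Lemma min_spreads_down mu x y rho s :
  (forall u v, u ^ 2 + v ^ 2 <= 1 -> 0 <= v -> mu <= Psi a N (u, v)) ->
  Psi a N (x, y) = mu -> 0 < rho <= y -> x ^ 2 + y ^ 2 <= s ^ 2 -> 0 <= s -> s + rho <= 1 ->
  Psi a N (x, y - rho) = mu.
Proof.
  intros Hmin Hc Hrho Hxy Hs Hs1.
  set (M := (4 * (N + 1))%nat). set (c := ((x, y) : C)).
  set (f := fun l => Psi a N (c + RtoC rho * root_unity M ^ l)%C).
  assert (Hcircle : forall l, (1 <= l <= M)%nat -> 0 <= f l - mu).
  { intros l _. unfold f, root_unity. rewrite Cexpi_pow.
    set (phi := (INR l * (2 * PI / INR M))%R).
    replace (c + RtoC rho * Cexpi phi)%C with ((x + rho * cos phi, y + rho * sin phi) : C)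
      by (unfold c, RtoC, Cexpi, Cmult, Cplus; simpl; f_equal; ring).
    pose proof (cos_sin_sq phi). pose proof (SIN_bound phi). pose proof (COS_bound phi).
    enough (mu <= Psi a N (x + rho * cos phi, y + rho * sin phi)) by lra.
    apply Hmin; [|nra].
    assert (Hproj : (x * cos phi + y * sin phi) ^ 2 <= s ^ 2).
    { assert (0 <= (x * sin phi - y * cos phi) ^ 2) by apply pow2_ge_0. nra. }
    assert (x * cos phi + y * sin phi <= s) by nra.
    nra. }
  assert (Haverage : rsum_1 (fun l => f l - mu) M = 0).
  { rewrite rsum_minus.
    unfold f, Psi. rewrite rsum_const, <- Im_csum, mean_value by (unfold M; lia).
    rewrite im_scal_l. change (Im (Fpoly a N c)) with (Psi a N c). unfold c. rewrite Hc. ring. }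
  assert (Hbottom : (root_unity M ^ (3 * (N + 1)))%C = ((0, -1) : C)).
  { unfold root_unity. rewrite Cexpi_pow. unfold M.
    replace (INR (3 * (N + 1)) * (2 * PI / INR (4 * (N + 1))))%R with (3 * (PI / 2))%R.
    - unfold Cexpi. now rewrite cos_3PI2, sin_3PI2.
    - rewrite !mult_INR, plus_INR. simpl INR. field. pose proof (pos_INR N). lra. }
  pose proof (rsum_nonneg_eq0 _ M Hcircle Haverage (3 * (N + 1)) ltac:(unfold M; lia)) as E.
  unfold f in E. rewrite Hbottom in E.
  replace ((x, y - rho) : C) with (c + RtoC rho * (0, -1))%C
    by (unfold c, RtoC, Cmult, Cplus; simpl; f_equal; ring).
  lra.
Qed.

Lemma min_reaches_axis mu x s rho K :
  (forall u v, u ^ 2 + v ^ 2 <= 1 -> 0 <= v -> mu <= Psi a N (u, v)) ->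
  0 < rho -> 0 <= s -> s + rho <= 1 -> x ^ 2 + (INR K * rho) ^ 2 <= s ^ 2 ->
  Psi a N (x, INR K * rho) = mu -> Psi a N (x, 0) = mu.
Proof.
  intros Hmin Hrho Hs Hs1. induction K as [|K IH]; intros Hxy Hval.
  - now rewrite Rmult_0_l in Hval.
  - pose proof (pos_INR K) as HK. rewrite S_INR in Hxy, Hval.
    assert (HKrho : 0 <= INR K * rho) by (apply Rmult_le_pos; lra).
    apply IH; [nra|].
    replace (INR K * rho) with ((INR K + 1) * rho - rho) by ring.
    apply (min_spreads_down mu x _ rho s); [exact Hmin | exact Hval | nra | exact Hxy | lra | lra].
Qed.

Lemma step_size y eps : 0 < y -> 0 < eps -> exists K rho, 0 < rho <= eps /\ y = INR K * rho.
Proof.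
  intros Hy Heps. destruct (INR_unbounded (y / eps)) as [K HK].
  assert (0 < y / eps) by (apply Rdiv_lt_0_compat; lra).
  exists K, (y / INR K). repeat split.
  - apply Rdiv_lt_0_compat; lra.
  - apply (Rmult_le_reg_r (INR K)); [lra|]. unfold Rdiv.
    rewrite Rmult_assoc, Rinv_l, Rmult_1_r by lra.
    apply (Rmult_lt_compat_r eps) in HK; [|lra]. unfold Rdiv in HK.
    rewrite Rmult_assoc, Rinv_l, Rmult_1_r in HK by lra. lra.
  - field. lra.
Qed.

(* A negative minimum is attained at an interior point
   r0 e^{it0} (Phi vanishes for r = 0, t = 0, t = π, and is ≥ 0 for r = 1), and
   would be carried down to the real axis, where Psi vanishes. *)
Lemma upper_half_disc_nonneg : (forall t, 0 <= t <= PI -> 0 <= Phi a N 1 t) ->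
  forall x y, x ^ 2 + y ^ 2 <= 1 -> 0 <= y -> 0 <= Psi a N (x, y).
Proof.
  intros Hcircle x y Hxy Hy.
  destruct half_disc_min as [r0 [t0 [Hr0 [Ht0 Hmin]]]].
  set (mu := Phi a N r0 t0) in *.
  destruct (Rle_dec 0 mu) as [Hmu|Hmu]; [specialize (Hmin x y Hxy Hy); lra|].
  exfalso. apply Rnot_le_lt in Hmu. pose proof PI_RGT_0.
  assert (r0 <> 0) by (intros ->; unfold mu in Hmu; rewrite Phi_at_center in Hmu; lra).
  assert (r0 <> 1) by (intros ->; specialize (Hcircle t0 Ht0); unfold mu in Hmu; lra).
  assert (t0 <> 0) by (intros ->; unfold mu in Hmu; rewrite Phi_at_0 in Hmu; lra).
  assert (t0 <> PI) by (intros ->; unfold mu in Hmu; rewrite Phi_at_PI in Hmu; lra).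
  assert (Hy0 : 0 < r0 * sin t0) by (apply Rmult_lt_0_compat; [lra | apply sin_gt_0; lra]).
  destruct (step_size (r0 * sin t0) (1 - r0) Hy0 ltac:(lra)) as [K [rho [Hrho Hy0K]]].
  assert (Hstart : Psi a N (r0 * cos t0, INR K * rho) = mu).
  { rewrite <- Hy0K. unfold mu. rewrite <- Psi_polar. f_equal.
    unfold RtoC, Cexpi, Cmult; simpl. f_equal; ring. }
  apply (min_reaches_axis mu _ r0 rho K Hmin) in Hstart; [| lra | lra | lra |].
  - rewrite Psi_real_axis in Hstart. lra.
  - rewrite <- Hy0K. pose proof (cos_sin_sq t0). nra.
Qed.

Lemma typically_real : (forall t, 0 <= t <= PI -> 0 <= Phi a N 1 t) ->
  forall z : C, fst z ^ 2 + snd z ^ 2 <= 1 -> 0 <= Psi a N z * snd z.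
Proof.
  intros Hcircle [x y] Hz. simpl in Hz |- *.
  destruct (Rle_dec 0 y).
  - pose proof (upper_half_disc_nonneg Hcircle x y Hz r). nra.
  - assert (E : Psi a N (x, y) = - Psi a N (x, - y)).
    { change ((x, - y) : C) with (Cconj (x, y)). rewrite Psi_conj. ring. }
    pose proof (upper_half_disc_nonneg Hcircle x (- y) ltac:(nra) ltac:(lra)). nra.
Qed.

End MinimumPrinciple.

End PN_theory.

Import PN_theory.

Theorem mainTheorem3 (N : nat) (HN : (1 <= N)%nat) :
  (forall t : R, 0 < t < PI -> t <> 2 * PI / (INR N + 2) ->
     Im (PN N (Cexpi t)) =
       (1 - cos (2 * PI / (INR N + 2))) / ((INR N + 2) * (1 - cos t)) *
       (sin t * (sin ((INR N + 2) * t / 2)) ^ 2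
        / (cos t - cos (2 * PI / (INR N + 2))) ^ 2)) /\
  (forall t : R, 0 <= t <= PI -> 0 <= Im (PN N (Cexpi t))) /\
  (forall z : Cplx, Cmod z < 1 -> 0 <= Im (PN N z) * Im z).
Proof.
  split; [|split].
  - intros t Ht Hne. rewrite two_theta in Hne.
    rewrite Im_PN_circle, Phi_at_radius_1. now apply circle_sum_closed_form.
  - intros t Ht. rewrite Im_PN_circle. now apply circle_nonneg.
  - intros z Hz. rewrite Im_PN. apply typically_real; [now apply circle_nonneg|].
    unfold Cmod in Hz. rewrite <- sqrt_1 in Hz. apply sqrt_lt_0_alt in Hz. lra.
Qed.
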